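(* Let $\Psi\in\mathcal{E}_c\otimes\mathfrak{gl}(T)^1$ satisfy $\Psi s\in \mathrm{im}\,\partial^*=\mathcal{B}_1$ for all $s\in T$, and set $\tilde\nabla=\nabla+\Psi$. Then the BGG-splitting operator $\tilde L_0:\mathcal{H}_0\to T$ and the first BGG-operator $\tilde\Theta_0:\mathcal{H}_0\to\mathcal{H}_1$ constructed from $\tilde\nabla$ coincide with those constructed from $\nabla$, i.e. $\tilde L_0=L_0$ and $\tilde\Theta_0=\Theta_0$.
   Context: Conformal geometry $(M,[g])$ with standard tractor bundle $\mathcal{S}$; $T$ is a tractor bundle (a subbundle of a tensor power of $\mathcal{S}$) with its tractor connection $\nabla$, filtered by homogeneity. $\mathfrak{gl}(T)^1$ denotes the endomorphisms of $T$ homogeneous of degree $\geq 1$ with respect to this filtration. On the chain spaces $\mathcal{C}_k=\mathcal{E}_{[c_1\cdots c_k]}\otimes T$ there is the conformally invariant Kostant codifferential $\partial^*:\mathcal{C}_{k+1}\to\mathcal{C}_k$; set $\mathcal{Z}_k=\ker\partial^*\cap\mathcal{C}_k$, $\mathcal{B}_k=\mathrm{im}\,\partial^*\cap\mathcal{C}_k$, $\mathcal{H}_k=\mathcal{Z}_k/\mathcal{B}_k$ with projections $\Pi_k:\mathcal{Z}_k\to\mathcal{H}_k$. The BGG-construction works for $\nabla$ and for any connection $\nabla+\Psi$ with $\Psi\in\mathcal{E}_c\otimes\mathfrak{gl}(T)^1$: for each $\sigma\in\mathcal{H}_0$ there is a unique lift $s=L_0\sigma\in T$ with $\Pi_0 s=\sigma$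 and $\partial^*(\nabla s)=0$ (this defines the BGG-splitting operator $L_0$), and the first BGG-operator is $\Theta_0=\Pi_1\circ\nabla\circ L_0$; the operators $\tilde L_0,\tilde\Theta_0$ are defined in the same way using $\tilde\nabla$ in place of $\nabla$. *)

(* Abstract (algebraic) model of the BGG machinery:
   C0 = sections of T, C1 = E_c (x) T, C2 = E_[cd] (x) T, as modules over R;
   the Kostant codifferential dstar1 : C1 -> C0, dstar2 : C2 -> C1;
   H0 = Z0/B0 (Z0 = C0), H1 = Z1/B1 given by projections Pi0, Pi1. *)
From HB Require Import structures.
From mathcomp Require Import all_boot all_order all_algebra.
Set Implicit Arguments. Unset Strict Implicit. Unset Printing Implicit Defensive.
Import GRing.Theory.
Local Open Scope ring_scope.

Section BGG.
Variables (R : pzRingType) (C0 C1 C2 : lmodType R) (H0 H1 : Type).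

Definition codiff_complex (dstar1 : C1 -> C0) (dstar2 : C2 -> C1) : Prop :=
  forall w, dstar1 (dstar2 w) = 0.

Definition is_proj0 (dstar1 : C1 -> C0) (Pi0 : C0 -> H0) : Prop :=
  (forall s s', Pi0 s = Pi0 s' <-> exists w, s - s' = dstar1 w) /\
  (forall sigma, exists s, Pi0 s = sigma).

(* Pi1 : Z1 = ker dstar1 -> H1 = Z1 / B1, with B1 = im dstar2
   (only its values on Z1 are relevant) *)
Definition is_proj1 (dstar1 : C1 -> C0) (dstar2 : C2 -> C1) (Pi1 : C1 -> H1)
  : Prop :=
  (forall z z', dstar1 z = 0 -> dstar1 z' = 0 ->
     (Pi1 z = Pi1 z' <-> exists w, z - z' = dstar2 w)) /\
  (forall tau, exists z, dstar1 z = 0 /\ Pi1 z = tau).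

Definition BGG_splitting (dstar1 : C1 -> C0) (Pi0 : C0 -> H0)
  (nab : C0 -> C1) (L : H0 -> C0) : Prop :=
  forall sigma, [/\ Pi0 (L sigma) = sigma, dstar1 (nab (L sigma)) = 0 &
    forall s, Pi0 s = sigma -> dstar1 (nab s) = 0 -> s = L sigma].

Definition BGG_operator (Pi1 : C1 -> H1) (nab : C0 -> C1) (L : H0 -> C0)
  : H0 -> H1 := fun sigma => Pi1 (nab (L sigma)).

End BGG.

(* The perturbation Psi takes values in B1 = im dstar2, which dstar1 kills
   since dstar1 o dstar2 = 0. Hence nabla and nabla + Psi impose the same
   normalisation condition dstar1 (nab s) = 0, so their splitting operators
   agree; and nabla L0 sigma and (nabla + Psi) L0 sigma differ by an element
   of B1, so they have the same class in H1. *)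
From HB Require Import structures.
From mathcomp Require Import all_boot all_order all_algebra.
Set Implicit Arguments. Unset Strict Implicit. Unset Printing Implicit Defensive.
Import GRing.Theory.
Local Open Scope ring_scope.

Section SplittingUniqueness.
Variables (R : pzRingType) (C0 C1 : lmodType R) (H0 : Type).
Variables (dstar1 : C1 -> C0) (Pi0 : C0 -> H0).

Lemma BGG_splitting_unique (nab nab' : C0 -> C1) (L L' : H0 -> C0) :
  (forall s, dstar1 (nab' s) = dstar1 (nab s)) ->
  BGG_splitting dstar1 Pi0 nab L -> BGG_splitting dstar1 Pi0 nab' L' ->
  L' =1 L.
Proof.
move=> same_dstar splitL splitL' sigma.
have [PiL dstarL _] := splitL sigma.
have [_ _ uniqL'] := splitL' sigma.
by apply/esym/uniqL'; rewrite ?same_dstar.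
Qed.

End SplittingUniqueness.

Section BoundaryPerturbation.
Variables (R : pzRingType) (C0 C1 C2 : lmodType R) (H1 : Type).
Variables (dstar1 : {linear C1 -> C0}) (dstar2 : {linear C2 -> C1}).
Hypothesis dstar_complex : codiff_complex dstar1 dstar2.

Lemma codiff_addB (z : C1) (w : C2) : dstar1 (z + dstar2 w) = dstar1 z.
Proof. by rewrite linearD /= dstar_complex addr0. Qed.

Lemma proj1_addB (Pi1 : C1 -> H1) (z : C1) (w : C2) :
  is_proj1 dstar1 dstar2 Pi1 -> dstar1 z = 0 -> Pi1 (z + dstar2 w) = Pi1 z.
Proof.
move=> [Pi1_eq _] z_cycle.
apply/(Pi1_eq _ _ _ z_cycle); first by rewrite codiff_addB.
by exists w; rewrite addrAC subrr add0r.
Qed.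

End BoundaryPerturbation.

Theorem mainTheorem2 (R : pzRingType) (C0 C1 C2 : lmodType R) (H0 H1 : Type)
  (dstar1 : {linear C1 -> C0}) (dstar2 : {linear C2 -> C1})
  (Pi0 : C0 -> H0) (Pi1 : C1 -> H1)
  (nabla : {linear C0 -> C1}) (Psi : {linear C0 -> C1})
  (L0 Lt0 : H0 -> C0) :
  codiff_complex dstar1 dstar2 ->
  is_proj0 dstar1 Pi0 ->
  is_proj1 dstar1 dstar2 Pi1 ->
  (forall s : C0, exists w : C2, Psi s = dstar2 w) ->
  BGG_splitting dstar1 Pi0 nabla L0 ->
  BGG_splitting dstar1 Pi0 (fun s => nabla s + Psi s) Lt0 ->
  (forall sigma, Lt0 sigma = L0 sigma) /\
  (forall sigma, BGG_operator Pi1 (fun s => nabla s + Psi s) Lt0 sigma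
                 = BGG_operator Pi1 nabla L0 sigma).
Proof.
move=> dstar_complex _ Pi1_proj Psi_boundary splitL0 splitLt0.
have Lt0_L0 : Lt0 =1 L0.
  apply: BGG_splitting_unique splitL0 splitLt0 => s.
  by have [w ->] := Psi_boundary s; rewrite codiff_addB.
split=> // sigma; rewrite /BGG_operator Lt0_L0.
have [_ L0_normalised _] := splitL0 sigma.
have [w ->] := Psi_boundary (L0 sigma).
by rewrite (proj1_addB dstar_complex _ Pi1_proj L0_normalised).
Qed.
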